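(* Let $T\in\mathbb{R}^{n\times n}$ be substochastic and such that $A=I-T$ is a lower Hessenberg invertible M-matrix. Let $P_{GS}=\operatorname{tril}(A)^{-1}(\operatorname{tril}(A)-A)$ and $P_{AGS}=\operatorname{triu}(A)^{-1}(\operatorname{triu}(A)-A)$. Then $\rho(P_{GS})\geq\rho(P_{AGS})$.
   Context: $T$ is substochastic if $T\geq 0$ entrywise and $T\mathbf{1}\leq\mathbf{1}$, with $\mathbf{1}$ the all-ones vector. $A$ is lower Hessenberg if $A_{ij}=0$ whenever $j>i+1$. $\operatorname{tril}(A)$ (resp. $\operatorname{triu}(A)$) is the lower (resp. upper) triangular part of $A$ including the diagonal. $\rho(\cdot)$ denotes the spectral radius. *)

From HB Require Import structures.
From mathcomp Require Import all_boot all_order all_algebra.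
From mathcomp Require Import complex.
Set Implicit Arguments. Unset Strict Implicit. Unset Printing Implicit Defensive.
Import Order.TTheory GRing.Theory Num.Theory.
Local Open Scope ring_scope.

Section Defs.
Variable R : rcfType.

Definition eigenvalues (n : nat) (A : 'M[R]_n) : seq R[i] :=
  sval (closed_field_poly_normal (char_poly (map_mx (fun x : R => x%:C%C) A))).

(* Spectral radius: max modulus of the (complex) eigenvalues (0 if n = 0). *)
Definition spectral_radius (n : nat) (A : 'M[R]_n) : R :=
  \big[Num.max/0]_(z <- eigenvalues A) ComplexField.Normc.normc z.

Definition nonneg_mx (m n : nat) (A : 'M[R]_(m, n)) : Prop :=
  forall i j, 0 <= A i j.

Definition substochastic (n : nat) (T : 'M[R]_n) : Prop :=
  nonneg_mx T /\ forall i, \sum_j T i j <= 1.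

Definition lower_hessenberg (n : nat) (A : 'M[R]_n) : Prop :=
  forall i j : 'I_n, (i.+1 < j)%N -> A i j = 0.

Definition invertible_M_matrix (n : nat) (A : 'M[R]_n) : Prop :=
  exists (s : R) (B : 'M[R]_n),
    nonneg_mx B /\ A = s%:M - B /\ spectral_radius B < s.

Definition tril (n : nat) (A : 'M[R]_n) : 'M[R]_n :=
  \matrix_(i, j) (if (j <= i)%N then A i j else 0).

Definition triu (n : nat) (A : 'M[R]_n) : 'M[R]_n :=
  \matrix_(i, j) (if (i <= j)%N then A i j else 0).

End Defs.

From HB Require Import structures.
From mathcomp Require Import all_boot all_order all_algebra.
From mathcomp Require Import complex polyrcf.
From mathcomp Require Import lra ring.
Set Implicit Arguments. Unset Strict Implicit. Unset Printing Implicit Defensive.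
Import Order.TTheory GRing.Theory Num.Theory.
Local Open Scope ring_scope.

(* Split A = D - L - U with D diagonal and L, U >= 0 strictly lower and
   upper, so that P_GS = (D - L)^-1 U and P_AGS = (D - U)^-1 L.  If z is an
   eigenvalue of P_AGS with eigenvector y, then x = |y| satisfies
   |z| D x <= L x + |z| U x.  As A is a nonsingular M-matrix this forces |z| < 1,
   and since U lives on the superdiagonal, w_i = |z|^i x_i then satisfies
   P_GS w >= |z| w, whence |z| <= rho(P_GS).
   Perron-Frobenius is replaced by the monotonicity of t I - P for P >= 0 and t
   above every real eigenvalue of P ((t I - P) y >= 0 implies y >= 0), proved by
   induction on the size through the Schur complement of the leading entry. *)

Lemma horner_char_poly (R : comNzRingType) n (P : 'M[R]_n) s :
  (char_poly P).[s] = \det (s%:M - P).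
Proof.
have -> : s%:M - P = map_mx (horner_eval s) (char_poly_mx P).
  apply/matrixP => i j; rewrite !mxE /horner_eval.
  by case: (i == j); rewrite /= !hornerE.
by rewrite det_map_mx.
Qed.

Lemma det_block_schur (R : comUnitRingType) n (a : 'M[R]_1) (u : 'M_(1, n))
    (v : 'M_(n, 1)) (N : 'M_n) :
  N \in unitmx ->
  \det (block_mx a u v N : 'M_(1 + n)) = \det N * (a - u *m invmx N *m v) 0 0.
Proof.
move=> N_unit.
pose K : 'M_(1 + n) := block_mx 1%:M 0 (- (invmx N *m v)) 1%:M.
have detK : \det K = 1 by rewrite det_lblock !det1 mulr1.
rewrite -[LHS]mulr1 -detK -det_mulmx mulmx_block !mulmx1 !mulmx0 !add0r.
by rewrite !mulmxN mulKVmx // subrr det_ublock det_mx11 mulrC mulmxA.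
Qed.

Lemma scalar_sub_block (R : pzRingType) n (P : 'M[R]_(1 + n)) s :
  s%:M - P =
  block_mx (s%:M - ulsubmx P) (- ursubmx P) (- dlsubmx P) (s%:M - drsubmx P).
Proof.
rewrite -{1}(submxK P) (scalar_mx_block 1 n) opp_block_mx add_block_mx.
by rewrite !add0r.
Qed.

Section Monotone.
Variable R : rcfType.

Lemma nonneg_mxM m n p (A : 'M[R]_(m, n)) (B : 'M[R]_(n, p)) :
  nonneg_mx A -> nonneg_mx B -> nonneg_mx (A *m B).
Proof. by move=> A0 B0 i j; rewrite mxE sumr_ge0 // => k _; rewrite mulr_ge0. Qed.

Lemma nonneg_mxD m n (A B : 'M[R]_(m, n)) :
  nonneg_mx A -> nonneg_mx B -> nonneg_mx (A + B).
Proof. by move=> A0 B0 i j; rewrite mxE addr_ge0. Qed.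

Lemma nonneg_mx_anti m n (A : 'M[R]_(m, n)) :
  nonneg_mx A -> nonneg_mx (- A) -> A = 0.
Proof.
move=> A_ge0 NA_ge0; apply/matrixP => i j; apply/le_anti.
by have := NA_ge0 i j; rewrite !mxE oppr_ge0 A_ge0 andbT.
Qed.

Lemma horner_le0_right (p : {poly R}) s0 :
  (forall s, s0 < s -> p.[s] <= 0) -> p.[s0] <= 0.
Proof.
move=> p_le0; rewrite leNgt; apply/negP => p_gt0.
have [d d_gt0 near_s0] := poly_cont s0 p p_gt0.
have s0_lt : s0 < s0 + d / 2%:R by lra.
have := near_s0 (s0 + d / 2%:R); have := p_le0 _ s0_lt.
rewrite addrAC subrr add0r ger0_norm; last lra.
by move=> ? /(_ ltac:(lra)); rewrite ltr_norml; lra.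
Qed.

Lemma poly_max_root (p : {poly R}) x : p != 0 -> root p x ->
  exists r, [/\ x <= r, root p r & forall y, r < y -> ~~ root p y].
Proof.
move=> p_neq0 px; have rootsRE := roots_on_rootsR p_neq0.
have inR y : root p y = (y \in rootsR p) by rewrite -rootsRE.
exists (\big[Num.max/x]_(y <- rootsR p) y); split.
- exact: bigmax_ge_id.
- rewrite big_seq; apply: (big_ind (root p)) => // [y z py pz | y].
    by rewrite /Num.max; case: ifP.
  by rewrite inR.
- move=> y lt_y; apply: contraTN lt_y; rewrite inR -leNgt => y_in.
  exact: le_bigmax_seq.
Qed.

Lemma trig_monotone n p (M : 'M[R]_n) (Y : 'M[R]_(n, p)) :
  is_trig_mx M -> (forall i, 0 < M i i) ->
  (forall i j : 'I_n, (j < i)%N -> M i j <= 0) ->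
  nonneg_mx (M *m Y) -> nonneg_mx Y.
Proof.
move=> /is_trig_mxP M_trig M_diag M_low MY_ge0 i j.
have [k] := ubnP i; elim: k i => // k IH i; rewrite ltnS => i_le_k.
have := MY_ge0 i j; rewrite mxE (bigD1 i) //=.
have others_le0 : \sum_(l | l != i) M i l * Y l j <= 0.
  apply: sumr_le0 => l l_neq_i.
  case: (ltngtP l i) => [l_lt_i | i_lt_l | /val_inj l_eq_i].
  - by rewrite mulr_le0_ge0 ?M_low ?IH // (leq_trans l_lt_i).
  - by rewrite M_trig // mul0r.
  - by rewrite l_eq_i eqxx in l_neq_i.
move=> sum_ge0; rewrite -(pmulr_rge0 _ (M_diag i)) (le_trans sum_ge0) //.
by rewrite gerDl.
Qed.

Definition real_eigenvalues_lt n (P : 'M[R]_n) t :=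
  forall s, t <= s -> \det (s%:M - P) != 0.

Definition shift_monotone n (P : 'M[R]_n) t :=
  forall y : 'cV_n, nonneg_mx ((t%:M - P) *m y) -> nonneg_mx y.

Lemma det_shift_gt0 n (P : 'M[R]_n) t :
  real_eigenvalues_lt P t -> 0 < \det (t%:M - P).
Proof.
move=> P_lt; have lc1 : lead_coef (char_poly P) = 1.
  exact/monicP/char_poly_monic.
have [N N_ge1] : exists N, forall x, N <= x -> 1 <= (char_poly P).[x].
  by rewrite -lc1; apply: poly_pinfty_gt_lc; rewrite lc1 ltr01.
rewrite -horner_char_poly ltNge; apply/negP => le0.
have t_le : t <= Num.max N t by rewrite le_max lexx orbT.
have sign_change : (char_poly P).[t] <= 0 <= (char_poly P).[Num.max N t].
  by rewrite le0 (le_trans ler01) // N_ge1 // le_max lexx.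
have [r /andP[t_le_r _] /rootP] := poly_ivt t_le sign_change.
by rewrite horner_char_poly; apply/eqP/P_lt.
Qed.

Lemma shift_unitmx n (P : 'M[R]_n) t :
  real_eigenvalues_lt P t -> t%:M - P \in unitmx.
Proof. by move=> P_lt; rewrite unitmxE unitfE gt_eqF ?det_shift_gt0. Qed.

Section SchurStep.
Variable n : nat.
Hypothesis IH : forall (Q : 'M[R]_n) t,
  nonneg_mx Q -> real_eigenvalues_lt Q t -> shift_monotone Q t.
Variable P : 'M[R]_(1 + n).
Hypothesis P_ge0 : nonneg_mx P.

Local Notation a := (ulsubmx P).
Local Notation u := (ursubmx P).
Local Notation v := (dlsubmx P).
Local Notation Q := (drsubmx P).

Let u_ge0 : nonneg_mx u. Proof. by move=> i j; rewrite !mxE. Qed.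
Let v_ge0 : nonneg_mx v. Proof. by move=> i j; rewrite !mxE. Qed.
Let Q_ge0 : nonneg_mx Q. Proof. by move=> i j; rewrite !mxE. Qed.

Definition schur s := (s%:M - a - u *m invmx (s%:M - Q) *m v) 0 0.

Lemma det_shift_schur s :
  real_eigenvalues_lt Q s -> \det (s%:M - P) = \det (s%:M - Q) * schur s.
Proof.
move=> Q_lt; rewrite scalar_sub_block det_block_schur ?shift_unitmx //.
by rewrite !(mulNmx, mulmxN, opprK).
Qed.

Lemma invmx_shift_mul_ge0 s (x : 'cV_n) : real_eigenvalues_lt Q s ->
  nonneg_mx x -> nonneg_mx (invmx (s%:M - Q) *m x).
Proof.
by move=> Q_lt x_ge0; apply: (IH Q_ge0 Q_lt); rewrite mulKVmx ?shift_unitmx.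
Qed.

Lemma schur_le s : real_eigenvalues_lt Q s -> schur s <= s - a 0 0.
Proof.
move=> Q_lt; have := nonneg_mxM u_ge0 (invmx_shift_mul_ge0 Q_lt v_ge0) 0 0.
rewrite /schur -mulmxA mxE => uv_ge0.
by rewrite !mxE eqxx mulr1n lerBlDr lerDl.
Qed.

Lemma real_eigenvalues_lt_drsubmx t :
  real_eigenvalues_lt P t -> real_eigenvalues_lt Q t.
Proof.
(* Right of the largest real eigenvalue s0 >= s1 of Q, the Schur complement
   gives det (s I - P) <= det (s I - Q) (s - a), hence det (s0 I - P) <= 0. *)
move=> P_lt s1 t_le_s1; apply/negP => /eqP det0.
have cQ_neq0 : char_poly Q != 0 by apply/monic_neq0/char_poly_monic.
have [s0 [s1_le_s0 root_s0 no_root]] :=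
  poly_max_root cQ_neq0 (introT rootP (etrans (horner_char_poly Q s1) det0)).
have Q_lt s : s0 < s -> real_eigenvalues_lt Q s.
  move=> lt_s s' le_s'; rewrite -horner_char_poly no_root //.
  exact: lt_le_trans lt_s le_s'.
have right_of_s0 s : s0 < s ->
    (char_poly P - char_poly Q * ('X - (a 0 0)%:P)).[s] <= 0.
  move=> /Q_lt Qs_lt; rewrite !hornerE !horner_char_poly det_shift_schur //.
  by rewrite -mulrBr mulr_ge0_le0 ?subr_le0 ?schur_le // ltW ?det_shift_gt0.
have := horner_le0_right right_of_s0.
rewrite !hornerE (rootP root_s0) mul0r subr0 horner_char_poly leNgt.
rewrite det_shift_gt0 //.
by move=> s s0_le_s; rewrite P_lt // (le_trans t_le_s1) // (le_trans s1_le_s0).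
Qed.

Lemma schur_gt0 t : real_eigenvalues_lt P t -> 0 < schur t.
Proof.
move=> P_lt; have Q_lt := real_eigenvalues_lt_drsubmx P_lt.
by rewrite -(pmulr_rgt0 _ (det_shift_gt0 Q_lt)) -det_shift_schur // det_shift_gt0.
Qed.

Lemma shift_monotone_step t : real_eigenvalues_lt P t -> shift_monotone P t.
Proof.
move=> P_lt y; have Q_lt := real_eigenvalues_lt_drsubmx P_lt.
rewrite -(vsubmxK y) scalar_sub_block mul_block_col.
set N := t%:M - Q; have N_unit : N \in unitmx by rewrite shift_unitmx.
set y1 := usubmx y; set y2 := dsubmx y.
set f1 := _ + _; set f2 := _ + _ => f_ge0.
have f1_ge0 : nonneg_mx f1.
  by move=> i j; have := f_ge0 (lshift n i) j; rewrite col_mxEu.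
have f2_ge0 : nonneg_mx f2.
  by move=> i j; have := f_ge0 (rshift 1 i) j; rewrite col_mxEd.
have y1_ge0 : nonneg_mx y1.
  have schur_y1 :
      (t%:M - a - u *m invmx N *m v) *m y1 = f1 + u *m (invmx N *m f2).
    rewrite mulmxDr mulKmx // mulmxDr /f1 mulmxBl !mulNmx !linearN /= !mulmxA.
    by rewrite -addrA; congr (_ + _); rewrite addrC addrK.
  move=> i j; have := nonneg_mxD f1_ge0
    (nonneg_mxM u_ge0 (invmx_shift_mul_ge0 Q_lt f2_ge0)) i j.
  rewrite -schur_y1 [X in X *m _]mx11_scalar mul_scalar_mx mxE pmulr_rge0 //.
  exact: schur_gt0.
have y2_ge0 : nonneg_mx y2.
  apply: (IH Q_ge0 Q_lt); rewrite -/N.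
  have -> : N *m y2 = f2 + v *m y1 by rewrite /f2 mulNmx addrAC addNr add0r.
  exact/nonneg_mxD/nonneg_mxM.
by move=> i j; rewrite mxE; case: splitP => k _; [apply: y1_ge0 | apply: y2_ge0].
Qed.
End SchurStep.

Theorem nonneg_shift_monotone n (P : 'M[R]_n) t :
  nonneg_mx P -> real_eigenvalues_lt P t -> shift_monotone P t.
Proof.
elim: n P t => [|n IH] P t P_ge0 P_lt; first by move=> y _ [].
exact: shift_monotone_step.
Qed.

End Monotone.

Section Spectrum.
Variable R : rcfType.
Local Notation toC := (fun x : R => x%:C%C).
Local Notation normc := (@ComplexField.Normc.normc R).

Lemma eigenvaluesE n (P : 'M[R]_n) z :
  (z \in eigenvalues P) = root (char_poly (map_mx toC P)) z.
Proof.
rewrite /eigenvalues; case: closed_field_poly_normal => r /= ->.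
by rewrite (monicP (char_poly_monic _)) scale1r root_prod_XsubC.
Qed.

Lemma spectral_radius_ge0 n (P : 'M[R]_n) : 0 <= spectral_radius P.
Proof. exact: bigmax_ge_id. Qed.

Lemma normc_le_spectral_radius n (P : 'M[R]_n) z :
  z \in eigenvalues P -> normc z <= spectral_radius P.
Proof. by move=> z_eig; apply: le_bigmax_seq. Qed.

Lemma spectral_radius_le n (P : 'M[R]_n) c : 0 <= c ->
  (forall z, z \in eigenvalues P -> normc z <= c) -> spectral_radius P <= c.
Proof. by move=> c_ge0 le_c; rewrite /spectral_radius big_seq bigmax_le. Qed.

Lemma normc_normr (x : R[i]) : (normc x)%:C%C = `|x|.
Proof. by []. Qed.

Lemma normc_ge0 (x : R[i]) : 0 <= normc x.
Proof. by rewrite -lecR normc_normr normr_ge0. Qed.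

Lemma normc_real (x : R) : normc x%:C%C = `|x|.
Proof. by rewrite /ComplexField.Normc.normc /= expr0n addr0 sqrtr_sqr. Qed.

Lemma real_eigenvalues_lt_spectral_radius n (P : 'M[R]_n) t :
  spectral_radius P < t -> real_eigenvalues_lt P t.
Proof.
move=> lt_t s le_s; apply/eqP => det0.
have : normc s%:C%C <= spectral_radius P.
  apply: normc_le_spectral_radius; rewrite eigenvaluesE -map_char_poly.
  by apply/rootP; rewrite horner_map /= horner_char_poly det0 rmorph0.
by rewrite normc_real leNgt (lt_le_trans lt_t) // (le_trans le_s) // ler_norm.
Qed.

Lemma eigenvalue_eigenvector n (P : 'M[R]_n) z : z \in eigenvalues P ->
  exists2 y : 'cV_n, y != 0 & map_mx toC P *m y = z *: y.
Proof.
rewrite eigenvaluesE => /rootP; rewrite horner_char_poly => /eqP.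
rewrite -det_tr => /det0P[v v_neq0 v_ker]; exists v^T; first by rewrite trmx_eq0.
apply/eqP; rewrite eq_sym -subr_eq0 -mul_scalar_mx -mulmxBl -trmx_eq0.
by rewrite trmx_mul trmxK; apply/eqP.
Qed.

Definition mx_normc m n (y : 'M[R[i]]_(m, n)) : 'M[R]_(m, n) := map_mx normc y.

Lemma mx_normc_ge0 m n (y : 'M[R[i]]_(m, n)) : nonneg_mx (mx_normc y).
Proof. by move=> i j; rewrite mxE normc_ge0. Qed.

Lemma mx_normc_eq0 m n (y : 'M[R[i]]_(m, n)) : (mx_normc y == 0) = (y == 0).
Proof.
apply/eqP/eqP => [y0 | ->]; apply/matrixP => i j; rewrite !mxE.
  apply: ComplexField.Normc.eq0_normc.
  by move/matrixP: y0 => /(_ i j); rewrite !mxE.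
exact: ComplexField.Normc.normc0.
Qed.

Lemma normc_mulmx_le m n p (M : 'M[R]_(m, n)) (y : 'M[R[i]]_(n, p)) i j :
  nonneg_mx M -> normc ((map_mx toC M *m y) i j) <= (M *m mx_normc y) i j.
Proof.
move=> M_ge0; rewrite !mxE -lecR normc_normr rmorph_sum /=.
apply: le_trans (ler_norm_sum _ _ _) _; apply: ler_sum => k _.
by rewrite !mxE normrM rmorphM /= -normc_normr normc_real ger0_norm.
Qed.

End Spectrum.

Section MMatrix.
Variable R : rcfType.

Lemma invertible_M_matrix_monotone n (A : 'M[R]_n) (x : 'cV_n) :
  invertible_M_matrix A -> nonneg_mx (A *m x) -> nonneg_mx x.
Proof.
move=> [s [B [B_ge0 [-> rho_lt]]]].
exact/nonneg_shift_monotone/real_eigenvalues_lt_spectral_radius.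
Qed.

Lemma invertible_M_matrix_offdiag_le0 n (A : 'M[R]_n) i j :
  invertible_M_matrix A -> i != j -> A i j <= 0.
Proof.
move=> [s [B [B_ge0 [-> _]]]] /negbTE neq_ij.
by rewrite !mxE neq_ij mulr0n sub0r oppr_le0.
Qed.

Lemma invertible_M_matrix_diag_gt0 n (A : 'M[R]_n) i :
  invertible_M_matrix A -> 0 < A i i.
Proof.
move=> A_M; rewrite ltNge; apply/negP => A_ii_le0.
have e_ge0 : nonneg_mx (- delta_mx i 0 : 'cV[R]_n).
  apply: (invertible_M_matrix_monotone A_M) => j k.
  rewrite mulmxN -colE !mxE oppr_ge0.
  have [<-|neq_ij] := eqVneq i j; first exact: A_ii_le0.
  by rewrite invertible_M_matrix_offdiag_le0 // eq_sym.
by have := e_ge0 i 0; rewrite !mxE !eqxx oppr_ge0 ler10.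
Qed.

Lemma le_spectral_radius_subinvariant n (P : 'M[R]_n) (w : 'cV_n) m :
  nonneg_mx P -> nonneg_mx w -> w != 0 -> nonneg_mx (P *m w - m *: w) ->
  m <= spectral_radius P.
Proof.
move=> P_ge0 w_ge0 w_neq0 Pw_ge; rewrite leNgt; apply/negP => rho_lt.
have P_lt := real_eigenvalues_lt_spectral_radius rho_lt.
have Nw_ge0 : nonneg_mx (- w).
  apply: (nonneg_shift_monotone P_ge0 P_lt).
  by rewrite mulmxN mulmxBl mul_scalar_mx opprB.
by move/eqP: w_neq0; apply; apply: nonneg_mx_anti.
Qed.

End MMatrix.

Section Splitting.
Variables (R : rcfType) (n : nat).
Implicit Types M : 'M[R]_n.

Definition diag_part M := diag_mx (\row_i M i i).
Definition strict_lower M := \matrix_(i, j) (if (j < i)%N then M i j else 0).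
Definition strict_upper M := \matrix_(i, j) (if (i < j)%N then M i j else 0).

Lemma diag_strict_split M : M = diag_part M + strict_lower M + strict_upper M.
Proof.
apply/matrixP => i j; rewrite !mxE.
have [-> | neq_ij] := eqVneq i j; first by rewrite ltnn mulr1n !addr0.
rewrite mulr0n add0r.
case: ltngtP => [_ | _ | /val_inj eq_ij]; rewrite ?addr0 ?add0r //.
by rewrite eq_ij eqxx in neq_ij.
Qed.

Lemma tril_split M : tril M = diag_part M + strict_lower M.
Proof.
apply/matrixP => i j; rewrite !mxE.
have [-> | neq_ij] := eqVneq i j; first by rewrite leqnn ltnn mulr1n addr0.
rewrite mulr0n add0r leq_eqVlt.
by case: eqVneq => [/val_inj eq_ji | //]; rewrite eq_ji eqxx in neq_ij.
Qed.

Lemma triu_split M : triu M = diag_part M + strict_upper M.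
Proof.
apply/matrixP => i j; rewrite !mxE.
have [-> | neq_ij] := eqVneq i j; first by rewrite leqnn ltnn mulr1n addr0.
rewrite mulr0n add0r leq_eqVlt.
by case: eqVneq => [/val_inj eq_ij | //]; rewrite eq_ij eqxx in neq_ij.
Qed.

Lemma tril_subr M : tril M - M = - strict_upper M.
Proof. by rewrite {2}[M]diag_strict_split tril_split opprD addrA subrr add0r. Qed.

Lemma triu_subr M : triu M - M = - strict_lower M.
Proof.
rewrite {2}[M]diag_strict_split triu_split [_ + strict_lower M + _]addrAC.
by rewrite opprD addrA subrr add0r.
Qed.

Lemma mul_diag_part M (x : 'cV[R]_n) : diag_part M *m x = \col_i (M i i * x i 0).
Proof. by rewrite mul_diag_mx; apply/matrixP => i j; rewrite !mxE ord1. Qed.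

End Splitting.

Section HessenbergGaussSeidel.
Variables (R : rcfType) (n : nat) (A : 'M[R]_n).
Hypotheses (A_M : invertible_M_matrix A) (A_hess : lower_hessenberg A).

Local Notation toC := (fun x : R => x%:C%C).
Local Notation normc := (@ComplexField.Normc.normc R).
Local Notation D := (diag_part A).
Local Notation L := (- strict_lower A).
Local Notation U := (- strict_upper A).
Local Notation P_GS := (invmx (tril A) *m (tril A - A)).
Local Notation P_AGS := (invmx (triu A) *m (triu A - A)).

Let A_diag_gt0 i : 0 < A i i. Proof. exact: invertible_M_matrix_diag_gt0. Qed.

Let A_offdiag_le0 (i j : 'I_n) : (i != j :> nat) -> A i j <= 0.
Proof. by move=> neq_ij; apply: invertible_M_matrix_offdiag_le0. Qed.

Let L_ge0 : nonneg_mx L.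
Proof.
move=> i j; rewrite !mxE oppr_ge0.
by case: ltnP => // lt_ji; rewrite A_offdiag_le0 // gtn_eqF.
Qed.

Let U_ge0 : nonneg_mx U.
Proof.
move=> i j; rewrite !mxE oppr_ge0.
by case: ltnP => // lt_ij; rewrite A_offdiag_le0 // ltn_eqF.
Qed.

Lemma tril_trig : is_trig_mx (tril A).
Proof. by apply/is_trig_mxP => i j lt_ij; rewrite mxE leqNgt lt_ij. Qed.

Lemma tril_unitmx : tril A \in unitmx.
Proof.
rewrite unitmxE unitfE det_trig ?tril_trig // gt_eqF // prodr_gt0 // => i _.
by rewrite mxE leqnn.
Qed.

Lemma triu_unitmx : triu A \in unitmx.
Proof.
rewrite -unitmx_tr unitmxE unitfE det_trig; last first.
  by apply/is_trig_mxP => i j lt_ij; rewrite !mxE leqNgt lt_ij.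
by rewrite gt_eqF // prodr_gt0 // => i _; rewrite !mxE leqnn.
Qed.

Lemma tril_monotone p (Y : 'M[R]_(n, p)) : nonneg_mx (tril A *m Y) -> nonneg_mx Y.
Proof.
apply: trig_monotone tril_trig _ _ => [i | i j lt_ji]; rewrite mxE ?leqnn //.
by rewrite ltnW // A_offdiag_le0 // gtn_eqF.
Qed.

Lemma P_GS_ge0 : nonneg_mx P_GS.
Proof.
by apply: tril_monotone; rewrite mulmxA mulmxV ?tril_unitmx // mul1mx tril_subr.
Qed.

Definition AGS_subinvariant m (x : 'cV[R]_n) :=
  nonneg_mx (L *m x + m *: (U *m x) - m *: (D *m x)).

Lemma eigenvalue_AGS_subinvariant z : z \in eigenvalues P_AGS ->
  exists2 y : 'cV[R[i]]_n, y != 0 & AGS_subinvariant (normc z) (mx_normc y).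
Proof.
move=> /eigenvalue_eigenvector[y y_neq0 eig_y]; exists y => // i j; rewrite ord1.
have eq_y :
    z *: (map_mx toC D *m y) = map_mx toC L *m y + z *: (map_mx toC U *m y).
  have triu_P : map_mx toC (triu A) *m map_mx toC P_AGS = map_mx toC L.
    by rewrite -map_mxM mulmxA mulmxV ?triu_unitmx // mul1mx triu_subr.
  rewrite -triu_P -mulmxA eig_y -scalemxAr triu_split map_mxD map_mxN.
  by rewrite mulmxDl mulNmx scalerDr scalerN addrK.
have := congr1 (fun M : 'cV_n => normc (M i 0)) eq_y => /=.
rewrite map_diag_mx mul_diag_mx mul_diag_part; set m := normc z.
have le_L := normc_mulmx_le y i 0 L_ge0.
have le_U := normc_mulmx_le y i 0 U_ge0.
rewrite !mxE in le_L le_U *.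
rewrite !ComplexField.Normc.normcM normc_real.
rewrite (ger0_norm (ltW (A_diag_gt0 i))) => ->.
rewrite subr_ge0 (le_trans (le_normcD _ _)) // ComplexField.Normc.normcM.
by rewrite lerD // ler_wpM2l // normc_ge0.
Qed.

Lemma AGS_subinvariant_lt1 m (x : 'cV[R]_n) :
  nonneg_mx x -> x != 0 -> AGS_subinvariant m x -> m < 1.
Proof.
move=> x_ge0 x_neq0 x_sub; rewrite ltNge; apply/negP => m_ge1.
suff Nx_ge0 : nonneg_mx (- x) by move/eqP: x_neq0; apply; apply: nonneg_mx_anti.
apply: (invertible_M_matrix_monotone A_M).
have Lx_ge0 : nonneg_mx (- (strict_lower A *m x)).
  by rewrite -mulNmx; apply: nonneg_mxM.
rewrite /AGS_subinvariant !mulNmx mul_diag_part in x_sub.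
rewrite mulmxN {1}(diag_strict_split A) !mulmxDl mul_diag_part => i j.
have := x_sub i j; have := Lx_ge0 i j; rewrite !mxE; nra.
Qed.

Definition diag_powers m : 'M[R]_n := diag_mx (\row_i m ^+ i).

Lemma diag_powers_ge0 m : 0 <= m -> nonneg_mx (diag_powers m).
Proof. by move=> m_ge0 i j; rewrite !mxE mulrn_wge0 // exprn_ge0. Qed.

Lemma strict_upper_diag_powers m : U *m diag_powers m = m *: (diag_powers m *m U).
Proof.
apply/matrixP => i j; rewrite mul_mx_diag mul_diag_mx !mxE.
case: ltnP => [lt_ij | _]; last by rewrite oppr0 !mul0r !mulr0.
have [eq_j | neq_j] := eqVneq (j : nat) i.+1; first by rewrite eq_j exprS; ring.
by rewrite A_hess ?oppr0 ?mul0r ?mulr0 // ltn_neqAle eq_sym neq_j.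
Qed.

Lemma strict_lower_diag_powers m : 0 <= m <= 1 ->
  nonneg_mx (m *: (L *m diag_powers m) - diag_powers m *m L).
Proof.
move=> /andP[m_ge0 m_le1] i j; rewrite mul_mx_diag mul_diag_mx !mxE.
case: ltnP => [lt_ji | _]; last by rewrite oppr0 !mul0r !mulr0 subrr.
have := A_offdiag_le0 (negbT (gtn_eqF lt_ji)).
have : m ^+ i <= m * m ^+ j by rewrite -exprS ler_wiXn2l.
nra.
Qed.

Lemma GS_subinvariant_diag_powers m x :
  0 <= m <= 1 -> nonneg_mx x -> AGS_subinvariant m x ->
  nonneg_mx (P_GS *m (diag_powers m *m x) - m *: (diag_powers m *m x)).
Proof.
move=> m01 x_ge0 x_sub; set G := diag_powers m.
have G_ge0 : nonneg_mx G by apply: diag_powers_ge0; case/andP: m01.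
apply: tril_monotone.
have -> : tril A *m (P_GS *m (G *m x) - m *: (G *m x)) =
    G *m (L *m x + m *: (U *m x) - m *: (D *m x)) +
    (m *: (L *m G) - G *m L) *m x.
  have DG : D *m G = G *m D by apply: diag_mx_comm.
  rewrite mulmxBr -scalemxAr mulmxA mulKVmx ?tril_unitmx // tril_subr tril_split.
  rewrite !(mulmxDl, mulmxBl, mulmxDr, mulmxBr, linearN, linearZ) /= !mulmxA.
  rewrite strict_upper_diag_powers DG -!scalemxAl !(mulNmx, mulmxN) -/G.
  by apply/matrixP => i j; rewrite !mxE; ring.
by apply: nonneg_mxD; apply: nonneg_mxM => //; apply: strict_lower_diag_powers.
Qed.

Lemma diag_powers_mul_eq0 m (x : 'cV[R]_n) :
  0 < m -> (diag_powers m *m x == 0) = (x == 0).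
Proof.
move=> m_gt0; apply/eqP/eqP => [Gx0 | ->]; last exact: mulmx0.
apply/matrixP => i j; move/matrixP: Gx0 => /(_ i j) /eqP.
by rewrite mul_diag_mx !mxE mulf_eq0 expf_eq0 (gt_eqF m_gt0) andbF => /eqP.
Qed.

Theorem spectral_radius_AGS_le_GS : spectral_radius P_AGS <= spectral_radius P_GS.
Proof.
apply: spectral_radius_le (spectral_radius_ge0 _) _ => z.
case/eigenvalue_AGS_subinvariant => y; rewrite -mx_normc_eq0.
set m := normc z; set x := mx_normc y => x_neq0 x_sub.
have x_ge0 : nonneg_mx x := mx_normc_ge0 y.
have := normc_ge0 z; rewrite -/m le_eqVlt => /orP[/eqP m0 | m_gt0].
  by rewrite -m0 spectral_radius_ge0.
have m01 : 0 <= m <= 1.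
  by rewrite !ltW // (AGS_subinvariant_lt1 x_ge0 x_neq0 x_sub).
apply: le_spectral_radius_subinvariant P_GS_ge0 _ _
  (GS_subinvariant_diag_powers m01 x_ge0 x_sub).
  exact/nonneg_mxM/x_ge0/diag_powers_ge0/ltW.
by rewrite diag_powers_mul_eq0.
Qed.

End HessenbergGaussSeidel.

Theorem theorem8 (R : rcfType) (n : nat) (T : 'M[R]_n) :
  substochastic T ->
  lower_hessenberg (1%:M - T) ->
  invertible_M_matrix (1%:M - T) ->
  let A := 1%:M - T in
  let P_GS := invmx (tril A) *m (tril A - A) in
  let P_AGS := invmx (triu A) *m (triu A - A) in
  spectral_radius P_AGS <= spectral_radius P_GS.
Proof. by move=> _ A_hess A_M; apply: spectral_radius_AGS_le_GS. Qed.
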